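(* Let $G$, $(B,\nu_B)$ be as in the context, and let $\omega:B^3\to\mathbb R$ be measurable such that $\omega$ is an alternating strict cocycle, for every $g\in G$ $\omega(gx,gy,gz)=\omega(x,y,z)$ for a.e. $(x,y,z)$, and $\omega\in\{\pm1\}$ almost everywhere. For $(x,y)\in B^2$ let $I(x,y)=\{z\in B:\omega(x,z,y)=1\}$ and for $a\in B$ define $f_a:B\to\mathbb Z\backslash\mathbb R$ by $f_a(x)=\nu_B(I(a,x))\bmod\mathbb Z$. Then for almost every $a\in B$ and almost every $(x,y,z)\in B^3$, $o(f_a(x),f_a(y),f_a(z))=\omega(x,y,z)$.
   Context: $G$ is a locally compact second countable group, $\mu$ a spread out probability measure on $G$, and $(B,\nu_B)$ a standard Lebesgue $G$-space with $\mu$-stationary $\nu_B$, doubly ergodic (diagonal action on $B\times B$ ergodic) and amenable. An alternating strict cocycle is a function on $B^3$ alternating in its variables with $\omega(y,z,w)-\omega(x,z,w)+\omega(x,y,w)-\omega(x,y,z)=0$ for all $(x,y,z,w)$. The orientation cocycle $o:(S^1)^3\to\{-1,0,1\}$ on $S^1=\mathbb Z\backslash\mathbb R$ is $1$ on positively oriented triples, $-1$ on negatively oriented triples, and $0$ if the points are not pairwise distinct. *)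

From HB Require Import structures.
From mathcomp Require Import all_boot all_order all_algebra.
From mathcomp Require Import all_classical all_reals all_analysis.

Set Implicit Arguments.
Unset Strict Implicit.
Unset Printing Implicit Defensive.

Import Order.TTheory GRing.Theory Num.Theory.
Local Open Scope classical_set_scope.
Local Open Scope ring_scope.

Definition group_axioms {G : Type} (mul : G -> G -> G) (inv : G -> G) (one : G) :=
  [/\ (forall x y z, mul x (mul y z) = mul (mul x y) z),
      (forall x, mul one x = x), (forall x, mul x one = x),
      (forall x, mul (inv x) x = one) & (forall x, mul x (inv x) = one)].

Definition lcsc_group (G : ptopologicalType)
    (mul : G -> G -> G) (inv : G -> G) (one : G) :=
  group_axioms mul inv one /\
  [/\ continuous (fun p : G * G => mul p.1 p.2),
      continuous inv,
      hausdorff_space G,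
      locally_compact [set: G] & @second_countable G].

Notation borel_of G := (g_sigma_algebraType (@open G)).

Definition left_haar (R : realType) (G : ptopologicalType)
    (mul : G -> G -> G) (haar : {measure set borel_of G -> \bar R}) :=
  [/\ (forall g (A : set (borel_of G)), measurable A ->
         haar [set mul g x | x in A] = haar A),
      (forall K : set G, compact K -> (haar K < +oo)%E),
      (forall U : set G, open U -> U !=set0 -> (0 < haar U)%E),
      (forall A : set (borel_of G), measurable A ->
         haar A = ereal_inf [set haar U | U in [set U : set G | open U /\ A `<=` U]]) &
      (forall U : set G, open U ->
         haar U = ereal_sup [set haar K | K in [set K : set G | compact K /\ K `<=` U]])].

Fixpoint convpow (R : realType) (G : ptopologicalType)
    (mul : G -> G -> G) (one : G) (mu : set (borel_of G) -> \bar R) (n : nat)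
    : set (borel_of G) -> \bar R :=
  match n with
  | 0 => fun A => ((\1_A one)%:E)%E
  | n'.+1 => fun A =>
      (\int[mu]_g convpow mul one mu n' [set h | A (mul g h)])%E
  end.

Definition mutually_singular d (T : measurableType d) (R : realType)
    (m1 m2 : set T -> \bar R) :=
  exists N : set T, [/\ measurable N, m1 N = 0%E & m2 (~` N) = 0%E].

Definition spread_out (R : realType) (G : ptopologicalType)
    (mul : G -> G -> G) (one : G) (haar : set (borel_of G) -> \bar R)
    (mu : set (borel_of G) -> \bar R) :=
  exists n : nat, ~ mutually_singular haar (convpow mul one mu n).

(* Standard Borel: Borel isomorphic to a Borel subset of the real line
   (equivalent, by Kuratowski, to being Borel isomorphic to a Borel
   subset of a Polish space). *)
Definition standard_borel d (B : measurableType d) (R : realType) :=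
  exists phi : B -> R,
    [/\ injective phi, measurable_fun [set: B] phi,
        measurable (range phi) &
        (forall A : set B, measurable A -> measurable (phi @` A))].

Definition measurable_action (G : ptopologicalType) (mul : G -> G -> G) (one : G)
    d (B : measurableType d) (act : G -> B -> B) :=
  [/\ (forall x, act one x = x),
      (forall g h x, act (mul g h) x = act g (act h x)) &
      measurable_fun [set: borel_of G * B]
        (fun p : borel_of G * B => act p.1 p.2)].

Definition stationary (R : realType) (G : ptopologicalType) d (B : measurableType d)
    (act : G -> B -> B) (mu : set (borel_of G) -> \bar R) (nu : set B -> \bar R) :=
  forall A : set B, measurable A ->
    nu A = (\int[mu]_g nu [set x | A (act g x)])%E.

Definition doubly_ergodic (R : realType) (G : ptopologicalType) d (B : measurableType d)
    (act : G -> B -> B) (nu : set B -> \bar R) :=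
  forall E : set (B * B), measurable E ->
    (forall g, [set p | E (act g p.1, act g p.2)] = E) ->
    ((nu \x nu)%E E = 0%E \/ (nu \x nu)%E (~` E) = 0%E).

Definition bdd_meas d (T : measurableType d) (R : realType) (f : T -> R) :=
  measurable_fun [set: T] f /\ exists M : R, forall x, `|f x| <= M.

(* Amenability of the action in the sense of Zimmer: there is a
   G-equivariant conditional expectation
   m : L^infty(G x B, haar x nu) -> L^infty(B, nu),
   i.e. a positive unital L^infty(B)-linear map commuting with the
   diagonal G-action (g.f)(h,b) = f(g^-1 h, g^-1 b).  Elements of L^infty
   are represented by bounded measurable functions; equalities are up to
   null sets (a set in G x B is haar x nu - null iff haar-a.e. section is
   nu-null, Fubini). *)
Definition zimmer_amenable (R : realType) (G : ptopologicalType)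
    (mul : G -> G -> G) (inv : G -> G)
    d (B : measurableType d) (act : G -> B -> B)
    (haar : set (borel_of G) -> \bar R) (nu : set B -> \bar R) :=
  exists m : (borel_of G * B -> R) -> (B -> R),
    (forall f, bdd_meas f -> bdd_meas (m f)) /\
    [/\
        (forall f f', bdd_meas f -> bdd_meas f' ->
           {ae haar, forall g, {ae nu, forall b, f (g, b) = f' (g, b)}} ->
           {ae nu, forall b, m f b = m f' b}),
        (* L^infty(B)-linearity (includes linearity over constants) *)
        (forall f f' (psi : B -> R), bdd_meas f -> bdd_meas f' -> bdd_meas psi ->
           {ae nu, forall b,
              m (fun p => psi p.2 * f p + f' p) b = psi b * m f b + m f' b}),
        (forall f, bdd_meas f ->
           {ae haar, forall g, {ae nu, forall b, 0 <= f (g, b)}} ->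
           {ae nu, forall b, 0 <= m f b}),
        {ae nu, forall b, m (fun _ => 1) b = 1} &
        (forall (g : G) f, bdd_meas f ->
           {ae nu, forall b,
              m (fun p => f ((mul (inv g) p.1, act (inv g) p.2) : borel_of G * B)) b
              = m f (act (inv g) b)})].

Definition alternating3 (T : Type) (R : realType) (w : T -> T -> T -> R) :=
  forall x y z, w y x z = - w x y z /\ w x z y = - w x y z.

Definition strict_cocycle (T : Type) (R : realType) (w : T -> T -> T -> R) :=
  forall x y z t, w y z t - w x z t + w x y t - w x y z = 0.

(* Representative in [0,1) of the class of t in Z\R. *)
Definition circ_rep (R : realType) (t : R) : R := t - (Num.floor t)%:~R.

Definition orient (R : realType) (s t u : R) : R :=
  let a := circ_rep s in let b := circ_rep t in let c := circ_rep u in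
  if [|| (a < b) && (b < c), (b < c) && (c < a) | (c < a) && (a < b)] then 1
  else if [|| (a < c) && (c < b), (c < b) && (b < a) | (b < a) && (a < c)] then -1
  else 0.

Definition Iset (T : Type) (R : realType) (w : T -> T -> T -> R) (x y : T) : set T :=
  [set z | w x z y = 1].

(* f_a(x) = nu(I(a,x)) (mod Z; the reduction is built into orient). *)
Definition fa d (B : measurableType d) (R : realType)
    (nu : set B -> \bar R) (w : B -> B -> B -> R) (a x : B) : R :=
  fine (nu (Iset w a x)).

(* Fix a and put c := w(a,.,.). The strict cocycle identity says that w is the
   coboundary of c, and f_a(x) is the measure of the set of "predecessors"
   {z | c(z,x) = 1} of x.  For a.e. a, c is +-1 a.e. and so is its coboundary w;
   the latter makes c a.e. transitive, so when c(u,v) = 1 the predecessors of v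
   are, up to a null set, those of u together with the disjoint set of points
   between u and v.  By Fubini, a set on which an a.e. total relation has null
   initial segments is null; hence the points between u and v have positive
   measure for a.e. such (u,v), and f_a < 1 a.e.  Thus c(u,v) = sign(f_a v - f_a u)
   a.e., and since on [0,1) the orientation cocycle is the coboundary of
   (s,t) |-> sign(t - s), o(f_a x, f_a y, f_a z) = (dc)(x,y,z) = w(x,y,z). *)

From HB Require Import structures.
From mathcomp Require Import all_boot all_order all_algebra.
From mathcomp Require Import all_classical all_reals all_analysis.
From mathcomp Require Import measurable_realfun lra.

Set Implicit Arguments.
Unset Strict Implicit.
Unset Printing Implicit Defensive.

Import Order.TTheory GRing.Theory Num.Theory.
Local Open Scope classical_set_scope.
Local Open Scope ring_scope.
Local Open Scope ereal_scope.

Lemma ae_preimage d d' (T : measurableType d) (U : measurableType d')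
    (R : realType) (mT : {measure set T -> \bar R}) (mU : {measure set U -> \bar R})
    (f : T -> U) (P : U -> Prop) :
  measurable_fun setT f ->
  (forall A, measurable A -> mU A = 0 -> mT (f @^-1` A) = 0) ->
  {ae mU, forall u, P u} -> {ae mT, forall t, P (f t)}.
Proof.
move=> mf fnull [N [mN N0 PN]]; exists (f @^-1` N); split.
- by rewrite -[_ @^-1` _]setTI; exact: mf.
- exact: fnull.
- by move=> t /= nPft; apply: PN.
Qed.

Lemma measure_eq_ae d (T : measurableType d) (R : realType)
    (mu : {measure set T -> \bar R}) (A B : set T) :
  measurable A -> measurable B -> {ae mu, forall x, A x <-> B x} -> mu A = mu B.
Proof.
move=> mA mB [N [mN N0 ABN]].
rewrite -(measureU0 mA mN N0) -(measureU0 mB mN N0); congr (mu _).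
apply/seteqP; split=> x [Ax|Nx]; (try by right);
  (have [ABx|nABx] := pselect (A x <-> B x); [left; exact/ABx|right; exact: ABN]).
Qed.

Section ae_product.
Context d1 d2 (T1 : measurableType d1) (T2 : measurableType d2) (R : realType).
Variables (m1 : {measure set T1 -> \bar R}) (m2 : {sigma_finite_measure set T2 -> \bar R}).

Lemma ae_xsection_null (N : set (T1 * T2)) : measurable N ->
  (m1 \x m2) N = 0 -> {ae m1, forall x, m2 (xsection N x) = 0}.
Proof.
move=> mN N0; have msec := measurable_fun_xsection m2 mN.
have : \int[m1]_x `|m2 (xsection N x)| = 0.
  by rewrite -N0; apply: eq_integral => x _; rewrite gee0_abs.
by move/(ae_eq_integral_abs m1 measurableT msec); apply: filterS => x /(_ I).
Qed.

Lemma product_measure_xsection_null (N : set (T1 * T2)) : measurable N ->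
  {ae m1, forall x, m2 (xsection N x) = 0} -> (m1 \x m2) N = 0.
Proof.
move=> mN N0; rewrite /product_measure1 /= (ae_eq_integral (cst 0)) ?integral0 //.
- exact: measurable_fun_xsection.
- by move: N0; apply: filterS => x + _.
Qed.

Lemma ae_xsection (P : T1 * T2 -> Prop) : {ae m1 \x m2, forall p, P p} ->
  {ae m1, forall x, {ae m2, forall y, P (x, y)}}.
Proof.
case=> N [mN N0 PN]; move: (ae_xsection_null mN N0); apply: filterS => x Nx0.
exists (xsection N x); split => //; first exact: measurable_xsection.
by move=> y /= nPxy; apply/xsectionP/PN.
Qed.

Lemma ae_fst (P : T1 -> Prop) : {ae m1, forall x, P x} ->
  {ae m1 \x m2, forall p, P p.1}.
Proof.
apply: ae_preimage; first exact: measurable_fst.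
move=> A mA A0; rewrite -setXT.
by transitivity (m1 A * m2 setT); [exact: product_measure1E|rewrite A0 mul0e].
Qed.

Lemma ae_snd (P : T2 -> Prop) : {ae m2, forall y, P y} ->
  {ae m1 \x m2, forall p, P p.2}.
Proof.
apply: ae_preimage; first exact: measurable_snd.
move=> A mA A0; rewrite -setTX.
by transitivity (m1 setT * m2 A); [exact: product_measure1E|rewrite A0 mule0].
Qed.

End ae_product.

Section ae_product_swap.
Context d1 d2 (T1 : measurableType d1) (T2 : measurableType d2) (R : realType).
Variables (m1 : {sigma_finite_measure set T1 -> \bar R})
  (m2 : {sigma_finite_measure set T2 -> \bar R}).

Lemma product_measure_swap (A : set (T1 * T2)) : measurable A ->
  (m2 \x m1) [set p | A (p.2, p.1)] = (m1 \x m2) A.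
Proof.
(* The ysections of [A] are the xsections of the mirrored set, so the
   mirrored product is [m1 \x^ m2] by definition. *)
move=> mA; rewrite (product_measure_unique (m' := m1 \x^ m2)) //.
by move=> A1 A2 mA1 mA2; exact: product_measure2E.
Qed.

Lemma ae_swap (P : T1 * T2 -> Prop) : {ae m1 \x m2, forall p, P p} ->
  {ae m2 \x m1, forall p, P (p.2, p.1)}.
Proof.
apply: ae_preimage => [|A mA A0]; last exact: etrans (product_measure_swap mA) A0.
by apply: measurable_fun_pair; [exact: measurable_snd|exact: measurable_fst].
Qed.

Lemma ae_ysection (P : T1 * T2 -> Prop) : {ae m1 \x m2, forall p, P p} ->
  {ae m2, forall y, {ae m1, forall x, P (x, y)}}.
Proof. by move/ae_swap/ae_xsection. Qed.

End ae_product_swap.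

Section ae_product3.
Context d1 d2 d3 (T1 : measurableType d1) (T2 : measurableType d2)
  (T3 : measurableType d3) (R : realType).
Variables (m1 : {measure set T1 -> \bar R})
  (m2 : {sigma_finite_measure set T2 -> \bar R})
  (m3 : {sigma_finite_measure set T3 -> \bar R}).

Lemma ae_prod13 (P : T1 * T3 -> Prop) : {ae m1 \x m3, forall p, P p} ->
  {ae (m1 \x m2) \x m3, forall q, P (q.1.1, q.2)}.
Proof.
have mf : measurable_fun setT (fun q : T1 * T2 * T3 => (q.1.1, q.2)).
  by apply: measurable_fun_pair => //; apply: measurableT_comp.
apply: ae_preimage => // N mN N0; apply: product_measure_xsection_null.
  by rewrite -[_ @^-1` _]setTI; exact: mf.
by apply: filterS (ae_fst m2 (ae_xsection_null mN N0)) => p; rewrite !xsectionE.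
Qed.

Lemma ae_prod23 (P : T2 * T3 -> Prop) : {ae m2 \x m3, forall p, P p} ->
  {ae (m1 \x m2) \x m3, forall q, P (q.1.2, q.2)}.
Proof.
have mf : measurable_fun setT (fun q : T1 * T2 * T3 => (q.1.2, q.2)).
  by apply: measurable_fun_pair => //; apply: measurableT_comp.
apply: ae_preimage => // N mN N0; apply: product_measure_xsection_null.
  by rewrite -[_ @^-1` _]setTI; exact: mf.
by apply: filterS (ae_snd m1 (ae_xsection_null mN N0)) => p; rewrite !xsectionE.
Qed.

End ae_product3.

Lemma measure0_of_null_segments d (T : measurableType d) (R : realType)
    (mu : {sigma_finite_measure set T -> \bar R}) (Y : set T) (r : T -> T -> Prop) :
  measurable Y -> measurable [set p : T * T | r p.1 p.2] ->
  {ae mu \x mu, forall p, r p.1 p.2 \/ r p.2 p.1} ->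
  (forall y, Y y -> mu (Y `&` [set x | r x y]) = 0) -> mu Y = 0.
Proof.
(* Up to a null set, [Y `*` Y] is covered by [D] and its mirror image, and
   the xsections of [D] are the null initial segments. *)
move=> mY mr total seg0.
pose D := (Y `*` Y) `&` [set p | r p.2 p.1].
have mD : measurable D.
  apply: measurableI; first exact: measurableX.
  have mswap : measurable_fun setT (fun p : T * T => (p.2, p.1)).
    by apply: measurable_fun_pair; [exact: measurable_snd|exact: measurable_fst].
  by rewrite -[X in measurable X]setTI; exact: (mswap measurableT _ mr).
have D0 : (mu \x mu) D = 0.
  apply: product_measure_xsection_null => //; apply: aeW => x.
  have [Yx|nYx] := pselect (Y x).
    rewrite -(seg0 x Yx); congr (mu _); apply/seteqP; split => y.
      by rewrite xsectionE => -[[]].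
    by rewrite xsectionE => -[].
  rewrite (_ : xsection D x = set0) ?measure0 //.
  by apply/seteqP; split => y //; rewrite xsectionE => -[[]].
have nD : {ae mu \x mu, forall p, ~ D p} by exists D; split => // p /= /contrapT.
have nYY : {ae mu \x mu, forall p, ~ (Y p.1 /\ Y p.2)}.
  move: total nD (ae_swap nD); apply: filterS3 => -[x y] /= rxy nDxy nDyx [Yx Yy].
  by case: rxy => ?; [apply: nDyx|apply: nDxy].
have YY0 : (mu \x mu) (Y `*` Y) = 0.
  apply/(negligibleP _ (measurableX mY mY)).
  by apply: negligibleS nYY => p YYp /(_ YYp).
move: YY0; have -> : (mu \x mu) (Y `*` Y) = mu Y * mu Y by exact: product_measure1E.
by move/eqP; rewrite mule_eq0 orbb => /eqP.
Qed.

Local Close Scope ereal_scope.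

Definition coboundary (T : Type) (V : zmodType) (c : T -> T -> V) (x y z : T) : V :=
  c y z - c x z + c x y.

Lemma circ_rep_id (R : realType) (x : R) : 0 <= x < 1 -> circ_rep x = x.
Proof. by move=> x01; rewrite /circ_rep (@floor_def _ x 0) ?subr0. Qed.

Lemma sgr_subE (R : realDomainType) (s t : R) :
  Num.sg (t - s) = if s < t then 1 else if t < s then -1 else 0.
Proof.
case: ltgtP => [st|ts|->]; last by rewrite subrr sgr0.
- by apply: gtr0_sg; rewrite subr_gt0.
- by apply: ltr0_sg; rewrite subr_lt0.
Qed.

Lemma orient_sg (R : realType) (x y z : R) :
  0 <= x < 1 -> 0 <= y < 1 -> 0 <= z < 1 ->
  orient x y z = coboundary (fun s t => Num.sg (t - s)) x y z.
Proof.
move=> x01 y01 z01; rewrite /orient /coboundary !circ_rep_id // !sgr_subE.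
by case: (ltgtP x y) => xy; case: (ltgtP y z) => yz; case: (ltgtP x z) => xz;
  rewrite /=; lra.
Qed.

(* With s = c u z, t = c v z and c u v = 1, the coboundary of c at (u,v,z) is
   t - s + 1; it cannot be +-1 if z precedes u but not v. *)
Lemma pm1_trans (R : realDomainType) (s t : R) : (s = 1 \/ s = -1) -> (t = 1 \/ t = -1) ->
  (t - s + 1 = 1 \/ t - s + 1 = -1) -> - s = 1 -> - t = 1.
Proof. by move=> [] -> [] -> h1 h2; lra. Qed.

Section rank_of_cocycle.
Context d (B : measurableType d) (R : realType) (nu : probability B R).
Local Notation m2 := (nu \x nu)%E.
Local Notation m3 := ((nu \x nu) \x nu)%E.
Variable c : B -> B -> R.
Hypothesis mc : measurable_fun setT (fun p : B * B => c p.1 p.2).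
Hypothesis c_alt : forall u v, c v u = - c u v.
Hypothesis c_pm1 : {ae m2, forall p, c p.1 p.2 = 1 \/ c p.1 p.2 = -1}.
Hypothesis dc_pm1 : {ae m3, forall q,
  coboundary c q.1.1 q.1.2 q.2 = 1 \/ coboundary c q.1.1 q.1.2 q.2 = -1}.

Definition preds x := [set z | c z x = 1].
Definition between u v := [set z | c u z = 1 /\ c z v = 1].
(* For c = w a, [rank] is the paper's f_a. *)
Definition rank x := fine (nu (preds x)).

Lemma measurable_c_eq d' (T : measurableType d') (f g : T -> B) (r : R) :
  measurable_fun setT f -> measurable_fun setT g ->
  measurable [set t | c (f t) (g t) = r].
Proof.
move=> mf mg; have mcfg : measurable_fun setT (fun t => c (f t) (g t)).
  exact: (measurableT_comp (f := fun p : B * B => c p.1 p.2) mc (measurable_fun_pair mf mg)).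
by rewrite -[X in measurable X]setTI; exact: (mcfg measurableT _ (measurable_set1 r)).
Qed.

Lemma measurable_preds x : measurable (preds x).
Proof. exact: measurable_c_eq. Qed.

Lemma measurable_between u v : measurable (between u v).
Proof. by apply: measurableI; exact: measurable_c_eq. Qed.

Lemma measurable_fun_preds : measurable_fun [set: B] (fun x => nu (preds x)).
Proof.
have mS : measurable [set p : B * B | c p.2 p.1 = 1] by exact: measurable_c_eq.
by apply: eq_measurable_fun (measurable_fun_xsection nu mS) => x _; rewrite /= xsectionE.
Qed.

Lemma measurable_fun_between :
  measurable_fun setT (fun p : B * B => nu (between p.1 p.2)).
Proof.
have mJ : measurable [set q : B * B * B | c q.1.1 q.2 = 1 /\ c q.2 q.1.2 = 1].
  by apply: measurableI; apply: measurable_c_eq => //; apply: measurableT_comp.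
by apply: eq_measurable_fun (measurable_fun_xsection nu mJ) => p _; rewrite /= xsectionE.
Qed.

Lemma nu_fineK (A : set B) : measurable A -> nu A = (fine (nu A))%:E.
Proof. by move=> mA; rewrite fineK // fin_num_measure. Qed.

Lemma c_total : {ae m2, forall p, c p.1 p.2 = 1 \/ c p.2 p.1 = 1}.
Proof.
by apply: filterS c_pm1 => p [->|e]; [left|right; rewrite c_alt e opprK].
Qed.

Lemma ae_rank_itv : {ae nu, forall x, 0 <= rank x < 1}.
Proof.
pose Y := [set x | nu (preds x) = 1%E].
have mY : measurable Y.
  have := measurable_fun_preds measurableT (emeasurable_set1 (1%E : \bar R)).
  by rewrite setTI.
have Y0 : nu Y = 0%E.
  apply: (measure0_of_null_segments (r := fun x y => c y x = 1)) => //.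
  - exact: measurable_c_eq.
  - by apply: filterS c_total => p /or_comm.
  - move=> y Yy; apply: (subset_measure0 (B := ~` preds y)) => //.
    + by apply: measurableI => //; exact: measurable_c_eq.
    + by apply: measurableC; exact: measurable_preds.
    + by move=> x [_ e]; rewrite /preds /= c_alt e; lra.
    + apply: (etrans (probability_setC nu (measurable_preds y))).
      by rewrite Yy subee.
have : {ae nu, forall x, ~ Y x} by exists Y; split => // x /= /contrapT.
apply: filterS => x nYx; rewrite fine_ge0 ?measure_ge0 //=.
have le1 : rank x <= 1.
  rewrite -lee_fin -nu_fineK; last exact: measurable_preds.
  exact: (probability_le1 nu (measurable_preds x)).
rewrite lt_neqAle le1 andbT; apply/eqP => r1; apply: nYx.
by rewrite /Y /= (nu_fineK (measurable_preds x)) -/(rank x) r1.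
Qed.

Lemma ae_between_pos :
  {ae m2, forall p, c p.1 p.2 = 1 -> nu (between p.1 p.2) != 0%E}.
Proof.
pose T := [set p : B * B | c p.1 p.2 = 1 /\ nu (between p.1 p.2) = 0%E].
have mT : measurable T.
  apply: measurableI; first exact: measurable_c_eq.
  have := measurable_fun_between measurableT (emeasurable_set1 (0%E : \bar R)).
  by rewrite setTI.
have T0 : m2 T = 0%E.
  apply: product_measure_xsection_null => //; apply: aeW => x.
  apply: (measure0_of_null_segments (r := fun y y' => c y y' = 1)).
  - exact: measurable_xsection.
  - exact: measurable_c_eq.
  - exact: c_total.
  - move=> y'; rewrite xsectionE => -[_ J0] /=.
    apply: (subset_measure0 (B := between x y')) => //.
    + apply: measurableI; last exact: measurable_c_eq.
      by rewrite -xsectionE; exact: measurable_xsection.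
    + exact: measurable_between.
    + by move=> y [[e1 _] e2].
have : {ae m2, forall p, ~ T p} by exists T; split => // p /= /contrapT.
by apply: filterS => p nTp e; apply/eqP => J0; apply: nTp.
Qed.

Lemma ae_preds_split : {ae m2, forall p, c p.1 p.2 = 1 ->
  nu (preds p.2) = (nu (preds p.1) + nu (between p.1 p.2))%E}.
Proof.
have : {ae m3, forall q, [/\ c q.1.1 q.2 = 1 \/ c q.1.1 q.2 = -1,
    c q.1.2 q.2 = 1 \/ c q.1.2 q.2 = -1 &
    coboundary c q.1.1 q.1.2 q.2 = 1 \/ coboundary c q.1.1 q.1.2 q.2 = -1]}.
  by apply: filterS3 (ae_prod13 nu c_pm1) (ae_prod23 nu c_pm1) dc_pm1 => q.
move/ae_xsection; apply: filterS => -[u v] /= Qz e.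
have preds_vE : {ae nu, forall z, preds v z <-> (preds u `|` between u v) z}.
  apply: filterS Qz => z [hu hv]; rewrite /coboundary e => hd.
  rewrite /preds /between /= (c_alt u z) (c_alt v z).
  split=> [cvz|[czu|[_ //]]]; last exact: pm1_trans hu hv hd czu.
  by case: hu => cuz; [right; split|left; rewrite cuz opprK].
rewrite (measure_eq_ae _ _ preds_vE); [|exact: measurable_preds|].
- rewrite measureU //; [exact: measurable_preds|exact: measurable_between|].
  by apply/seteqP; split => // z /= [czu [cuz _]]; move: cuz; rewrite c_alt czu; lra.
- by apply: measurableU; [exact: measurable_preds|exact: measurable_between].
Qed.

Lemma ae_rank_lt : {ae m2, forall p, c p.1 p.2 = 1 -> rank p.1 < rank p.2}.
Proof.
apply: filterS2 ae_between_pos ae_preds_split => -[u v] /= Jpos split_v e.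
have := split_v e; rewrite (nu_fineK (measurable_preds v)).
rewrite (nu_fineK (measurable_preds u)) (nu_fineK (measurable_between u v)).
rewrite -EFinD => -[rank_v].
have J_gt0 : 0 < fine (nu (between u v)).
  rewrite lt_neqAle fine_ge0 ?measure_ge0 // andbT eq_sym.
  apply: contra (Jpos e) => /eqP J0.
  by rewrite (nu_fineK (measurable_between u v)) J0.
by rewrite /rank rank_v ltrDl.
Qed.

Lemma ae_c_sg : {ae m2, forall p, c p.1 p.2 = Num.sg (rank p.2 - rank p.1)}.
Proof.
apply: filterS3 c_pm1 ae_rank_lt (ae_swap ae_rank_lt) => -[u v] /= [e|e] uv vu.
  by rewrite e gtr0_sg // subr_gt0; exact: uv.
by rewrite e ltr0_sg // subr_lt0; apply: vu; rewrite c_alt e opprK.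
Qed.

Lemma ae_orient_rank : {ae m3, forall q,
  orient (rank q.1.1) (rank q.1.2) (rank q.2) = coboundary c q.1.1 q.1.2 q.2}.
Proof.
have pair : {ae m2, forall p, [/\ c p.1 p.2 = Num.sg (rank p.2 - rank p.1),
    0 <= rank p.1 < 1 & 0 <= rank p.2 < 1]}.
  by apply: filterS3 ae_c_sg (ae_fst nu ae_rank_itv) (ae_snd nu ae_rank_itv) => p.
apply: filterS3 (ae_fst nu pair) (ae_prod13 nu pair) (ae_prod23 nu pair).
move=> q [e12 r1 r2] [e13 _ r3] [e23 _ _].
by rewrite orient_sg // /coboundary e12 e13 e23.
Qed.

End rank_of_cocycle.

Theorem lemma4p10 (R : realType) (G : ptopologicalType)
    (mul : G -> G -> G) (inv : G -> G) (one : G)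
    (haar : {measure set borel_of G -> \bar R})
    (mu : probability (borel_of G) R)
    (d : measure_display) (B : measurableType d) (act : G -> B -> B)
    (nu : probability B R)
    (w : B -> B -> B -> R) :
  lcsc_group mul inv one ->
  left_haar mul haar ->
  spread_out mul one haar mu ->
  standard_borel B R ->
  measurable_action mul one act ->
  stationary act mu nu ->
  doubly_ergodic act nu ->
  zimmer_amenable mul inv act haar nu ->
  measurable_fun [set: B * B * B] (fun p : B * B * B => w p.1.1 p.1.2 p.2) ->
  alternating3 w ->
  strict_cocycle w ->
  (forall g : G, {ae ((nu \x nu) \x nu)%E, forall p : B * B * B,
      w (act g p.1.1) (act g p.1.2) (act g p.2) = w p.1.1 p.1.2 p.2}) ->
  {ae ((nu \x nu) \x nu)%E, forall p : B * B * B,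
      w p.1.1 p.1.2 p.2 = 1 \/ w p.1.1 p.1.2 p.2 = -1} ->
  {ae nu, forall a : B, {ae ((nu \x nu) \x nu)%E, forall p : B * B * B,
      orient (fa nu w a p.1.1) (fa nu w a p.1.2) (fa nu w a p.2)
      = w p.1.1 p.1.2 p.2}}.
Proof.
move=> _ _ _ _ _ _ _ _ mw w_alt w_cocycle _ w_pm1.
have w_rot a u v : w u v a = w a u v.
  by have [_ ->] := w_alt u a v; have [-> _] := w_alt a u v; rewrite opprK.
have w_cob a x y z : w x y z = coboundary (w a) x y z.
  by have := w_cocycle a x y z; rewrite /coboundary; lra.
(* The cast exposes the sigma-finite structure of [nu \x nu]. *)
have := ae_ysection (m1 := (nu \x nu : probability (B * B)%type R)%E) w_pm1.
apply: filterS => a wa_pm1.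
have mwa : measurable_fun setT (fun p : B * B => w a p.1 p.2).
  have mpair : measurable_fun setT (fun p : B * B => (a, p.1, p.2)).
    by apply: measurable_fun_pair => //; apply: measurable_fun_pair.
  exact: (measurableT_comp (f := fun q : B * B * B => w q.1.1 q.1.2 q.2) mw mpair).
have wa_alt u v : w a v u = - w a u v by have [] := w_alt a u v.
have ca_pm1 : {ae (nu \x nu)%E, forall p, w a p.1 p.2 = 1 \/ w a p.1 p.2 = -1}.
  by apply: filterS wa_pm1 => p; rewrite /= !(w_rot a).
have dca_pm1 : {ae ((nu \x nu) \x nu)%E, forall q,
    coboundary (w a) q.1.1 q.1.2 q.2 = 1 \/ coboundary (w a) q.1.1 q.1.2 q.2 = -1}.
  by apply: filterS w_pm1 => q; rewrite -!w_cob.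
apply: filterS (ae_orient_rank mwa wa_alt ca_pm1 dca_pm1) => q.
by rewrite (w_cob a q.1.1 q.1.2 q.2).
Qed.
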